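(* Let $D=(E,\mathcal{F})$ be a connected even normal binary delta-matroid with $E\neq\emptyset$. Then ${}^{\partial}w_{D}(z)=mz^{k}$ for some integers $m,k$ (i.e. the twist polynomial has exactly one term) if and only if the intersection graph $G_D$ is a complete graph of odd order.
   Context: A delta-matroid is a set system $(E,\mathcal{F})$, $\mathcal{F}\ne\emptyset$ a family of subsets of finite $E$, satisfying: for all $X,Y\in\mathcal{F}$ and $u\in X\Delta Y$ there is $v\in X\Delta Y$ with $X\Delta\{u,v\}\in\mathcal{F}$. Twist: $D*A=(E,\{A\Delta X:X\in\mathcal{F}\})$. Width $w(D)$ = maximum minus minimum cardinality of feasible sets; twist polynomial ${}^{\partial}w_{D}(z)=\sum_{A\subseteq E}z^{w(D*A)}$. $D$ is normal if $\emptyset\in\mathcal{F}$, and even if $|F\Delta F'|$ is even for all $F,F'\in\mathcal{F}$. The direct sum of delta-matroids on disjoint ground sets is $(E\cup E',\{F\cup F'\})$; $D$ is disconnected if it is a direct sum of two delta-matroids with nonempty ground sets, connected otherwise. For a symmetric matrix $C$ over $GF(2)$ indexed by $E$, $D(C)=(E,\{A\subseteq E: C[A]\text{ nonsingular}\})$ ($C[A]$ principal submatrix, $C[\emptyset]$ nonsingular by convention). $D$ is binary if some twist of it is isomorphic to some $D(C)$. A normal binary $D$ equals $D(C)$ for a unique symmetric $C$; its intersection graph $G_D$ has vertex set $E$, distinct $u,v$ adjacent iff $C_{u,v}=1$, and a loop at $v$ iff $C_{v,v}=1$. For even $D$, $G_D$ is a simple graph, and $D$ is connected iff $G_D$ is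 connected. *)

From HB Require Import structures.
From mathcomp Require Import all_boot all_order all_algebra all_fingroup.
Set Implicit Arguments. Unset Strict Implicit. Unset Printing Implicit Defensive.
Import GRing.Theory.

Section DeltaMatroids.
Variable E : finType.
Implicit Types (F : {set {set E}}) (A X Y : {set E}).

Definition is_delta_matroid F : Prop :=
  F != set0 /\
  forall X Y, X \in F -> Y \in F -> forall u, u \in (X :\: Y) :|: (Y :\: X) ->
    exists2 v, v \in (X :\: Y) :|: (Y :\: X) &
      (X :\: [set u; v]) :|: ([set u; v] :\: X) \in F.

Definition symdiff A X : {set E} := (A :\: X) :|: (X :\: A).

Definition twist F A : {set {set E}} := [set symdiff A X | X in F].

Definition width F : nat :=
  (\max_(X in F) #|X|) - \big[minn/#|E|]_(X in F) #|X|.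

Definition twist_poly F : {poly int} :=
  \sum_(A : {set E}) 'X^(width (twist F A)).

Definition is_normal F : Prop := set0 \in F.

Definition is_even F : Prop :=
  forall X Y, X \in F -> Y \in F -> ~~ odd #|symdiff X Y|.

Definition is_disconnected F : Prop :=
  exists E1 : {set E}, E1 != set0 /\ ~: E1 != set0 /\
  exists F1 F2 : {set {set E}},
    (forall X, X \in F1 -> X \subset E1) /\
    (forall X, X \in F2 -> X \subset ~: E1) /\
    is_delta_matroid F1 /\ is_delta_matroid F2 /\
    F = [set X :|: Y | X in F1, Y in F2].

Definition is_connected F : Prop := ~ is_disconnected F.

Definition symmetric_mat (C : E -> E -> 'F_2) : Prop :=
  forall u v, C u v = C v u.

Definition principal_submx (C : E -> E -> 'F_2) A : 'M['F_2]_#|A| :=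
  \matrix_(i < #|A|, j < #|A|) C (enum_val i) (enum_val j).

(* D(C) = {A : C[A] nonsingular};  C[set0] is the 0x0 matrix, det = 1. *)
Definition DC (C : E -> E -> 'F_2) : {set {set E}} :=
  [set A : {set E} | (\det (principal_submx C A) != 0)%R].

Definition perm_image (s : {perm E}) F : {set {set E}} := [set (s @: X) | X : {set E} in F].

Definition is_binary F : Prop :=
  exists A, exists C : E -> E -> 'F_2, exists s : {perm E},
    symmetric_mat C /\ twist F A = perm_image s (DC C).

(* Intersection graph of D = D(C): distinct u,v adjacent iff C u v = 1.
   G_D is complete of odd order iff all distinct pairs are adjacent and |E| odd. *)
Definition adj_of (C : E -> E -> 'F_2) (u v : E) : bool := (u != v) && (C u v == 1%R).

Definition complete_odd_order (C : E -> E -> 'F_2) : Prop :=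
  (forall u v : E, u != v -> adj_of C u v) /\ odd #|E|.

End DeltaMatroids.

(* Let D = D(C) with C a symmetric matrix over GF(2), D normal and even, and
   let r be the largest size of a feasible set.  Every monomial of the twist
   polynomial has coefficient 1, so it has a single term iff all twists D * A
   have the same width, which is then w(D) = r.

   Comparing the widths of the twists by a vertex {v} and
   by a pair {u, v} with r shows: some maximum feasible set avoids any given
   vertex, and any given non-adjacent pair; every maximum feasible set meets
   every edge.  A basis-exchange argument then rules out induced paths
   u - w - v.  A graph without induced paths with a non-adjacent pair is
   disconnected, and D(C) of a block-diagonal C is a direct sum, so
   connectivity makes G_D complete.  A maximum feasible set avoiding v is
   then E - v, which is even, so |E| is odd.

   Backward direction.  For G_D complete, C[X] = J - I is nonsingular over
   GF(2) iff |X| is even, and every twist of the even subsets of a set of odd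
   size n has width n - 1. *)

From HB Require Import structures.
From mathcomp Require Import all_boot all_order all_algebra all_fingroup.
From mathcomp Require Import zify.
Import Order.TTheory GRing.Theory.
Set Implicit Arguments. Unset Strict Implicit. Unset Printing Implicit Defensive.

Section SymmetricDifference.
Variable T : finType.
Implicit Types A X : {set T}.

Lemma in_symdiff A X x : (x \in symdiff A X) = (x \in A) (+) (x \in X).
Proof. by rewrite !inE; case: (x \in A); case: (x \in X). Qed.

Lemma symdiffC A X : symdiff A X = symdiff X A.
Proof. by apply/setP=> x; rewrite !in_symdiff addbC. Qed.

Lemma symdiff0X X : symdiff set0 X = X.
Proof. by apply/setP=> x; rewrite in_symdiff inE. Qed.

Lemma symdiffXX X : symdiff X X = set0.
Proof. by apply/setP=> x; rewrite in_symdiff inE addbb. Qed.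

Lemma symdiffK A X : symdiff A (symdiff A X) = X.
Proof. by apply/setP=> x; rewrite !in_symdiff addbA addbb. Qed.

Lemma symdiff_eq0 A X : (symdiff A X == set0) = (A == X).
Proof.
apply/eqP/eqP => [/setP h | ->]; last exact: symdiffXX.
by apply/setP=> x; move: (h x); rewrite in_symdiff inE; case: (x \in A); case: (x \in X).
Qed.

Lemma card_symdiff A X : #|symdiff A X| + (#|A :&: X|).*2 = #|A| + #|X|.
Proof.
rewrite cardsU (_ : _ :&: _ = set0); last first.
  by apply/setP=> x; rewrite !inE; case: (x \in A); case: (x \in X).
rewrite cards0 subn0 !cardsD [X :&: A]setIC -addnn.
have := subset_leq_card (subsetIl A X); have := subset_leq_card (subsetIr A X).
lia.
Qed.

Lemma odd_symdiff A X : odd #|symdiff A X| = odd #|A| (+) odd #|X|.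
Proof. by have := congr1 odd (card_symdiff A X); rewrite !oddD odd_double addbF. Qed.

End SymmetricDifference.

Section Width.
Variable T : finType.
Implicit Types (F : {set {set T}}) (A X : {set T}).

Lemma width_lb F A X Y : X \in F -> Y \in F ->
  #|symdiff A X| - #|symdiff A Y| <= width (twist F A).
Proof.
move=> hX hY; rewrite /width /twist; apply: leq_sub; first exact/leq_bigmax_cond/imset_f.
have := bigmin_le_cond #|T| (fun Z : {set T} => #|Z|) (imset_f (symdiff A) hY).
by rewrite minEnat.
Qed.

Lemma width_ub F A M m : F != set0 ->
  (forall X, X \in F -> #|symdiff A X| <= M) ->
  (forall X, X \in F -> m <= #|symdiff A X|) ->
  width (twist F A) <= M - m.
Proof.
case/set0Pn=> X0 hX0 hM hm; apply: leq_sub.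
  by apply/bigmax_leqP => _ /imsetP [X hX ->]; apply: hM.
apply: (big_ind (leq m)); first exact: leq_trans (hm _ hX0) (max_card _).
  by move=> x y hx hy; rewrite leq_min hx hy.
by move=> _ /imsetP [X hX ->]; apply: hm.
Qed.

End Width.

Section TwistPolynomial.
Variable T : finType.
Local Open Scope ring_scope.

(* Every monomial of the twist polynomial has coefficient 1, so the
   polynomial has a single term iff all twists have the same width. *)
Lemma twist_poly_monomialP (F : {set {set T}}) :
  (exists (m : int) (k : nat), twist_poly F = m%:P * 'X^k) <->
  (exists k, forall A, width (twist F A) = k).
Proof.
split=> [[m [k h]] | [k h]]; last first.
  exists #|{: {set T}}|%:R, k.
  rewrite /twist_poly (eq_bigr (fun _ => 'X^k)) => [|A _]; last by rewrite h.
  by rewrite sumr_const polyC_natr mulr_natl.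
exists k => A; apply/eqP; apply: contraT => hne.
have := congr1 (fun p : {poly int} => p`_(width (twist F A))) h.
rewrite /= coefCM coefXn (negbTE hne) mulr0 /twist_poly coef_sum.
under eq_bigr do rewrite coefXn.
by rewrite -natr_sum => /eqP; rewrite Num.Theory.pnatr_eq0 (bigD1 A) //= eqxx.
Qed.

End TwistPolynomial.

Section GF2Matrices.
Local Open Scope ring_scope.

Lemma F2_cases (x : 'F_2) : x = 0 \/ x = 1.
Proof. by case: x => [[|[|]]] //= ?; [left | right]; apply/val_inj. Qed.

Lemma F2_natr n : n%:R = (odd n)%:R :> 'F_2.
Proof. by rewrite -(@Fp_nat_mod 2) // modn2. Qed.

Lemma mul_const_ones k a b :
  (const_mx 1 : 'M['F_2]_(a, k)) *m (const_mx 1 : 'M['F_2]_(k, b)) = const_mx k%:R.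
Proof.
apply/matrixP=> i j; rewrite !mxE (eq_bigr (fun _ => 1)) => [|l _].
  by rewrite sumr_const card_ord.
by rewrite !mxE mulr1.
Qed.

(* The adjacency matrix J - I of the complete graph K_k over GF(2) is
   nonsingular iff k is even: for k odd the all-ones vector is in its kernel,
   for k even it is an involution. *)
Lemma det_complete_adj k :
  (\det (\matrix_(i < k, j < k) ((i != j)%:R : 'F_2)) != 0) = ~~ odd k.
Proof.
have -> : \matrix_(i < k, j < k) (i != j)%:R = const_mx 1 - 1%:M :> 'M['F_2]_k.
  by apply/matrixP=> i j; rewrite !mxE; case: (i == j); rewrite ?subrr ?subr0.
case k_odd: (odd k) => /=.
  apply/negPn/det0P; exists (const_mx 1).
    case: k k_odd => // k _; apply/eqP => /matrixP /(_ 0 0) /eqP.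
    by rewrite !mxE oner_eq0.
  rewrite mulmxBr mulmx1 mul_const_ones F2_natr k_odd.
  by apply/matrixP => i j; rewrite !mxE subrr.
have invol : (const_mx 1 - 1%:M) *m (const_mx 1 - 1%:M) = 1%:M :> 'M['F_2]_k.
  rewrite mulmxBl !mulmxBr !mulmx1 mul1mx mul_const_ones F2_natr k_odd.
  by apply/matrixP => i j; rewrite !mxE; case: (i == j); apply/val_inj.
apply/eqP => det0; have := congr1 determinant invol.
by rewrite det_mulmx det0 mul0r det1 => /eqP; rewrite eq_sym oner_eq0.
Qed.

End GF2Matrices.

Lemma split_lshift m n (j : 'I_m) : split (lshift n j) = inl j.
Proof. exact: (unsplitK (inl j)). Qed.

Lemma split_rshift m n (j : 'I_n) : split (rshift m j) = inr j.
Proof. exact: (unsplitK (inr j)). Qed.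

Section Reindexing.
Variables (T : finType) (R : comPzRingType) (C : T -> T -> R).
Local Open Scope ring_scope.

Lemma det_cast n m (e : n = m) (f : 'I_m -> 'I_m -> R) :
  \det (\matrix_(i < n, j < n) f (cast_ord e i) (cast_ord e j)) =
  \det (\matrix_(i < m, j < m) f i j).
Proof.
by case: m / e f => f; congr (\det _); apply/matrixP=> i j; rewrite !mxE !cast_ord_id.
Qed.

Lemma det_reindex n (g1 g2 : 'I_n -> T) :
  injective g1 -> injective g2 -> (forall i, g1 i \in codom g2) ->
  \det (\matrix_(i, j) C (g1 i) (g1 j)) = \det (\matrix_(i, j) C (g2 i) (g2 j)).
Proof.
move=> inj1 inj2 g1_in.
pose s i := iinv (g1_in i).
have g2s i : g2 (s i) = g1 i by rewrite f_iinv.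
have s_inj : injective s by move=> a b sab; apply: inj1; rewrite -!g2s sab.
pose p := perm s_inj.
have -> : \matrix_(i, j) C (g1 i) (g1 j) =
          row_perm p (col_perm p (\matrix_(i, j) C (g2 i) (g2 j))).
  by apply/matrixP=> i j; rewrite !mxE !permE !g2s.
rewrite row_permE col_permE !det_mulmx !det_perm odd_permV.
by rewrite mulrC -mulrA -expr2 sqrr_sign mulr1.
Qed.

End Reindexing.

Section PrincipalSubmatrices.
Variables (T : finType) (C : T -> T -> 'F_2).
Local Open Scope ring_scope.

Lemma det_principal_submx n (h : 'I_n -> T) (X : {set T}) :
  injective h -> X = [set h i | i : 'I_n] ->
  \det (principal_submx C X) = \det (\matrix_(i, j) C (h i) (h j)).
Proof.
move=> h_inj defX.
have e : n = #|X| by rewrite defX card_imset // card_ord.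
rewrite /principal_submx -(det_cast e); apply: det_reindex => //.
  by move=> a b /enum_val_inj /cast_ord_inj.
move=> i; have := enum_valP (cast_ord e i).
by move: (enum_val _) => x; rewrite defX => /imsetP [j _ ->]; apply: codom_f.
Qed.

Lemma det_principal_submx_block (P X : {set T}) :
  (forall x y, x \in P -> y \notin P -> C x y = 0 /\ C y x = 0) ->
  \det (principal_submx C X) =
  \det (principal_submx C (X :&: P)) * \det (principal_submx C (X :\: P)).
Proof.
move=> block.
set X1 := X :&: P; set X2 := X :\: P.
have in1 (j : 'I_#|X1|) : enum_val j \in X1 by apply: enum_valP.
have in2 (j : 'I_#|X2|) : enum_val j \in X2 by apply: enum_valP.
pose h (i : 'I_(#|X1| + #|X2|)) : T :=
  match split i with inl j => enum_val j | inr k => enum_val k end.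
have disj (a : 'I_#|X1|) (b : 'I_#|X2|) : enum_val a != enum_val b.
  apply: contraTneq (in2 b) => <-; have := in1 a.
  by rewrite !inE => /andP [_ ->].
have h_inj : injective h.
  move=> i i'; rewrite /h -[i]splitK -[i']splitK !unsplitK.
  case: (split i) => a; case: (split i') => b e.
  - by rewrite (enum_val_inj e).
  - by move: (disj a b); rewrite e eqxx.
  - by move: (disj b a); rewrite e eqxx.
  - by rewrite (enum_val_inj e).
have defX : X = [set h i | i : 'I_(#|X1| + #|X2|)].
  apply/setP=> x; apply/idP/imsetP => [xX | [i _ ->]]; last first.
    by rewrite /h; case: (split i) => a; [move: (in1 a) | move: (in2 a)];
      rewrite !inE => /andP [].
  case xP: (x \in P).
    have x1 : x \in X1 by rewrite !inE xX xP.
    by exists (lshift #|X2| (enum_rank_in x1 x)); rewrite // /h split_lshift enum_rankK_in.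
  have x2 : x \in X2 by rewrite !inE xX xP.
  by exists (rshift #|X1| (enum_rank_in x2 x)); rewrite // /h split_rshift enum_rankK_in.
rewrite (det_principal_submx h_inj defX) -(det_ublock _ 0).
congr (\det _); apply/matrixP=> i j; rewrite -[i]splitK -[j]splitK.
case: (split i) => a; case: (split j) => b.
- by rewrite block_mxEul !mxE /h !split_lshift.
- rewrite block_mxEur !mxE /h split_lshift split_rshift.
  have := in1 a; have := in2 b; rewrite !inE => /andP [bP _] /andP [_ aP].
  by case: (block _ _ aP bP).
- rewrite block_mxEdl !mxE /h split_lshift split_rshift.
  have := in2 a; have := in1 b; rewrite !inE => /andP [_ bP] /andP [aP _].
  by case: (block _ _ bP aP).
- by rewrite block_mxEdr !mxE /h !split_rshift.
Qed.

End PrincipalSubmatrices.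

Section DeltaMatroids.
Variable T : finType.
Implicit Types (F : {set {set T}}) (P X Y Z : {set T}).

(* F splits along P when feasibility is decided independently on P and on
   its complement; this is what makes F the direct sum of its two parts. *)
Definition splits F P : Prop :=
  forall Z, (Z \in F) = (Z :&: P \in F) && (Z :&: ~: P \in F).

Lemma splitsC F P : splits F P -> splits F (~: P).
Proof. by move=> hP Z; rewrite setCK andbC. Qed.

Lemma splits_mix F P X Y : splits F P -> X \in F -> Y \in F ->
  X :&: P :|: Y :&: ~: P \in F.
Proof.
move=> hP; rewrite hP (hP Y) => /andP [XP _] /andP [_ YP].
rewrite hP; apply/andP; split; [congr (_ \in F): XP | congr (_ \in F): YP];
  by apply/setP=> t; rewrite !inE; case: (t \in P); rewrite ?andbT ?andbF ?orbF.
Qed.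

(* The restriction of a split delta-matroid to P is again a delta-matroid:
   an exchange inside P can be performed in F after replacing the outside part. *)
Lemma restr_delta_matroid F P : is_delta_matroid F -> splits F P ->
  is_delta_matroid [set X :&: P | X in F].
Proof.
move=> [F_neq0 exch] hP; split.
  by case/set0Pn: F_neq0 => X hX; apply/set0Pn; exists (X :&: P); apply: imset_f.
move=> _ _ /imsetP [X hX ->] /imsetP [Y hY ->] u hu.
set Y' := Y :&: P :|: X :&: ~: P.
have hY' : Y' \in F by apply: splits_mix.
have eS : symdiff X Y' = symdiff (X :&: P) (Y :&: P).
  apply/setP => t; rewrite !in_symdiff !inE.
  by case: (t \in P); case: (t \in X); case: (t \in Y).
have inP t : t \in symdiff (X :&: P) (Y :&: P) -> t \in P.
  by rewrite in_symdiff !inE; case: (t \in P); rewrite ?andbF.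
have hu' : u \in symdiff X Y' by rewrite eS.
have [v hv hXv] := exch X Y' hX hY' u hu'.
rewrite -/(symdiff _ _) eS in hv; exists v => //.
apply/imsetP; exists (symdiff X [set u; v]) => //.
apply/setP => t; rewrite !in_symdiff !inE.
case tP: (t \in P); rewrite ?andbT ?andbF /=.
  by case: (t \in X); case: (_ || _).
by apply/negbTE/norP; split; apply/eqP => e; [move: (inP _ hu) | move: (inP _ hv)];
  rewrite -e tP.
Qed.

Lemma splits_disconnected F P : is_delta_matroid F -> splits F P ->
  P != set0 -> ~: P != set0 -> is_disconnected F.
Proof.
move=> dm hP P_neq0 CP_neq0; exists P; split => //; split => //.
exists [set X :&: P | X in F], [set X :&: ~: P | X in F].
split; first by move=> _ /imsetP [X _ ->]; apply: subsetIr.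
split; first by move=> _ /imsetP [X _ ->]; apply: subsetIr.
split; first exact: restr_delta_matroid.
split; first exact: restr_delta_matroid (splitsC hP).
apply/setP => Z; apply/idP/imset2P => [hZ | [_ _ /imsetP [X hX ->] /imsetP [Y hY ->] ->]].
  exists (Z :&: P) (Z :&: ~: P); try exact: imset_f.
  by apply/setP=> t; rewrite !inE; case: (t \in P); rewrite ?andbT ?andbF ?orbF.
exact: splits_mix.
Qed.

(* Exchanging an element of a feasible X into a feasible set Y of maximum
   size forces an element of Y - X out, since Y cannot grow. *)
Lemma max_exchange F X Y x : is_delta_matroid F -> X \in F -> Y \in F ->
  (forall Z, Z \in F -> #|Z| <= #|Y|) -> x \in X :\: Y ->
  exists2 z, z \in Y :\: X & x |: (Y :\ z) \in F.
Proof.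
move=> [_ exch] hX hY Ymax /setDP [xX xY].
have hx : x \in symdiff Y X by rewrite in_symdiff xX (negbTE xY).
have [z hz hYz] := exch Y X hY hX x hx; rewrite -/(symdiff _ _) in hz hYz.
have [zX | zX] := boolP (z \in X).
  have zY : z \notin Y by move: hz; rewrite in_symdiff zX; case: (z \in Y).
  suff : #|Y| < #|symdiff Y [set x; z]| by rewrite ltnNge Ymax.
  apply/proper_card/properP; split.
    apply/subsetP => t tY; rewrite in_symdiff tY !inE.
    by apply/norP; split; apply/eqP => e; [move: xY | move: zY]; rewrite -e tY.
  by exists x; rewrite // in_symdiff (negbTE xY) !inE eqxx.
have zY : z \in Y by move: hz; rewrite in_symdiff (negbTE zX); case: (z \in Y).
exists z; first by rewrite inE zX.
congr (_ \in F): hYz; apply/setP => t; rewrite in_symdiff !inE.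
have [-> | tx] := eqVneq t x; first by rewrite (negbTE xY).
by have [-> | tz] := eqVneq t z; rewrite ?zY ?addbF.
Qed.

End DeltaMatroids.

Lemma even_ltn_add2 a b : ~~ odd a -> ~~ odd b -> a < b -> a + 2 <= b.
Proof.
move=> ea eb lt_ab; have := oddB (ltnW lt_ab); rewrite (negbTE ea) (negbTE eb).
have [-> // | ne1 _] := eqVneq (b - a) 1; lia.
Qed.

Section Rank.
Variable T : finType.
Implicit Types (F : {set {set T}}) (X : {set T}).

Definition rank F : nat := \max_(X in F) #|X|.

Lemma leq_rank F X : X \in F -> #|X| <= rank F.
Proof. exact: leq_bigmax_cond. Qed.

Lemma rank_attained F : F != set0 -> exists2 X, X \in F & #|X| = rank F.
Proof.
rewrite -card_gt0 => /(eq_bigmax_cond (fun X => #|X|)) [X hX eX].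
by exists X; rewrite // /rank eX.
Qed.

Lemma width_normal F : set0 \in F -> width (twist F set0) = rank F.
Proof.
move=> F0; have F_neq0 : F != set0 by apply/set0Pn; exists set0.
apply/eqP; rewrite eqn_leq; apply/andP; split.
  rewrite -[rank F]subn0; apply: width_ub => // X hX.
  by rewrite symdiff0X leq_rank.
have [X hX <-] := rank_attained F_neq0.
by have := width_lb set0 hX F0; rewrite !symdiff0X cards0 subn0.
Qed.

Lemma even_sets_width F : (forall X, (X \in F) = ~~ odd #|X|) -> odd #|T| ->
  forall A, width (twist F A) = #|T|.-1.
Proof.
move=> defF T_odd A.
have /card_gt0P [a _] : 0 < #|T| by exact: odd_gt0.
have F0 : set0 \in F by rewrite defF cards0.
have F_neq0 : F != set0 by apply/set0Pn; exists set0.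
have odd_tw X : X \in F -> odd #|symdiff A X| = odd #|A|.
  by rewrite defF odd_symdiff => /negbTE ->; rewrite addbF.
have in_tw (Z : {set T}) : odd #|Z| = odd #|A| -> symdiff A Z \in F.
  by rewrite defF odd_symdiff => ->; rewrite addbb.
have oddC1 : odd #|[set~ a]| = false by rewrite cardsC1; case: #|T| T_odd => //= n /negbTE.
apply/eqP; rewrite eqn_leq; case A_odd: (odd #|A|); apply/andP; split.
- rewrite -subn1; apply: width_ub => // X hX; first exact: max_card.
  by rewrite odd_gt0 // odd_tw.
- have := width_lb A (in_tw [set: T] _) (in_tw [set a] _).
  by rewrite !symdiffK cardsT cards1 subn1 A_odd; apply.
- rewrite -[_.-1]subn0; apply: width_ub => // X hX.
  have := max_card (mem (symdiff A X)); rewrite leq_eqVlt => /predU1P [e|].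
    by move: (odd_tw X hX); rewrite e T_odd A_odd.
  by case: #|T| T_odd.
- have := width_lb A (in_tw [set~ a] _) (in_tw set0 _).
  by rewrite !symdiffK oddC1 cardsC1 cards0 subn0 A_odd; apply.
Qed.

End Rank.

Section EvenBinary.
Variables (T : finType) (C : T -> T -> 'F_2).
Hypotheses (C_sym : symmetric_mat C) (D_dm : is_delta_matroid (DC C)).
Hypotheses (D_normal : is_normal (DC C)) (D_even : is_even (DC C)).
Local Notation D := (DC C).
Local Notation r := (rank D).
Implicit Types (A X Y : {set T}).

Lemma in_DC X : (X \in D) = (\det (principal_submx C X) != 0)%R.
Proof. by rewrite inE. Qed.

Lemma D_neq0 : D != set0.
Proof. by apply/set0Pn; exists set0. Qed.

Lemma feasible_even X : X \in D -> ~~ odd #|X|.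
Proof. by move/D_even/(_ D_normal); rewrite symdiffC symdiff0X. Qed.

(* Singletons are infeasible, so C has zero diagonal (G_D is loopless). *)
Lemma C_diag v : C v v = 0%R.
Proof.
have h_inj : injective (fun _ : 'I_1 => v) by move=> i j _; rewrite !ord1.
have defX : [set v] = [set (fun _ : 'I_1 => v) i | i : 'I_1].
  by apply/setP=> x; rewrite inE; apply/eqP/imsetP => [->|[i _ ->]] //; exists ord0.
have := @feasible_even [set v]; rewrite cards1 in_DC (det_principal_submx C h_inj defX).
by rewrite det_mx11 mxE; case: (F2_cases (C v v)) => -> // /(_ (oner_neq0 _)).
Qed.

Lemma pair_feasible u v : u != v -> ([set u; v] \in D) = (C u v == 1%R).
Proof.
move=> uv; pose h (i : 'I_2) := if i == ord0 then u else v.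
have h_inj : injective h.
  move=> i j; rewrite /h; case: i => [[|[|]]] //; case: j => [[|[|]]] //= ? ? e;
    by [apply/val_inj | move: uv; rewrite e eqxx].
have defX : [set u; v] = [set h i | i : 'I_2].
  apply/setP=> x; rewrite !inE; apply/idP/imsetP.
    by case/orP=> /eqP ->; [exists ord0 | exists ord_max].
  by case=> i _ ->; rewrite /h; case: (i == ord0); rewrite eqxx ?orbT.
rewrite in_DC (det_principal_submx C h_inj defX).
have -> : (\matrix_(i, j) C (h i) (h j) =
           C u v *: \matrix_(i < 2, j < 2) (i != j)%:R)%R.
  apply/matrixP=> i j; rewrite !mxE /h.
  by case: i => [[|[|]]] //; case: j => [[|[|]]] //= *;
    rewrite ?C_diag ?mulr0 ?mulr1 // C_sym.
case: (F2_cases (C u v)) => ->; first by rewrite scale0r det0 eqxx.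
by rewrite scale1r det_complete_adj eqxx.
Qed.

Lemma block_splits (P : {set T}) :
  (forall x y, x \in P -> y \notin P -> C x y = 0%R) -> splits D P.
Proof.
move=> block Z; have block2 x y : x \in P -> y \notin P -> C x y = 0%R /\ C y x = 0%R.
  by move=> xP yP; rewrite [C y x]C_sym !block.
by rewrite !in_DC (det_principal_submx_block Z block2) setDE mulf_eq0 negb_or.
Qed.

(* A graph without induced paths u - w - v in which p, q are non-adjacent is
   disconnected: the closed neighbourhood of p is a union of components. *)
Lemma nonedge_disconnected :
  (forall u v w, u != v -> C u w = 1%R -> C v w = 1%R -> C u v = 0%R -> False) ->
  forall p q, p != q -> C p q = 0%R -> is_disconnected D.
Proof.
move=> noP3 p q pq cpq.
pose P := [set x | (x == p) || (C p x == 1%R)].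
have block x y : x \in P -> y \notin P -> C x y = 0%R.
  rewrite !inE negb_or => /orP [/eqP -> | /eqP cpx] /andP [yp cpy].
    by case: (F2_cases (C p y)) cpy => ->; rewrite ?eqxx.
  have [// | cxy] := F2_cases (C x y).
  have [cpy0 | cpy1] := F2_cases (C p y); last by rewrite cpy1 eqxx in cpy.
  by case: (noP3 p y x) => //; [rewrite eq_sym | rewrite C_sym].
apply: (splits_disconnected D_dm (block_splits block)); apply/set0Pn.
  by exists p; rewrite inE eqxx.
by exists q; rewrite !inE negb_or eq_sym pq cpq.
Qed.

(* In a complete intersection graph C[X] = J - I, so feasibility is parity. *)
Lemma complete_feasible : (forall x y, x != y -> C x y = 1%R) ->
  forall X, (X \in D) = ~~ odd #|X|.
Proof.
move=> complete X; rewrite in_DC -det_complete_adj; congr (\det _ != 0)%R.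
apply/matrixP => i j; rewrite !mxE.
have [-> | ij] := eqVneq i j; first by rewrite C_diag.
by rewrite complete // (inj_eq enum_val_inj).
Qed.

Lemma rank_even : ~~ odd r.
Proof. by have [X hX <-] := rank_attained D_neq0; apply: feasible_even. Qed.

(* Feasible sets are even, so a non-maximum one is smaller by at least two. *)
Lemma lt_rank X : X \in D -> #|X| != r -> #|X| + 2 <= r.
Proof.
move=> hX ne; have lt_r : #|X| < r by rewrite ltn_neqAle ne leq_rank.
exact: even_ltn_add2 (feasible_even hX) rank_even lt_r.
Qed.

Section ConstantWidth.
Hypothesis const_width : forall A, width (twist D A) = r.

(* If every twisted feasible set is at least as large as A itself, some
   maximum feasible set is disjoint from A: otherwise all twisted sets have
   size at most |A| + r - 2 and the twist D * A would be too narrow. *)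
Lemma max_disjoint A : (forall X, X \in D -> #|A| <= #|symdiff A X|) ->
  exists2 X, X \in D & (#|X| == r) && (A :&: X == set0).
Proof.
move=> lbA; have [/exists_inP // | /exists_inPn none] :=
  boolP [exists X in D, (#|X| == r) && (A :&: X == set0)].
have r_pos : 0 < r.
  by rewrite lt0n; apply: contraTneq (none _ D_normal) => ->; rewrite cards0 setI0 !eqxx.
suff : width (twist D A) <= (#|A| + r - 2) - #|A| by rewrite const_width; lia.
apply: width_ub D_neq0 _ lbA => X hX; have := card_symdiff A X.
have [AX0 | AX_neq0] := eqVneq (A :&: X) set0.
  have := none X hX; rewrite AX0 eqxx andbT cards0 => /(lt_rank hX) /=; lia.
have : 0 < #|A :&: X| by rewrite card_gt0.
have := leq_rank hX; lia.
Qed.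

Lemma max_avoiding_vertex v : exists2 X, X \in D & (#|X| == r) && (v \notin X).
Proof.
have [X hX /andP [Xr vX]] : exists2 X, X \in D & (#|X| == r) && ([set v] :&: X == set0).
  apply: max_disjoint => X hX; rewrite cards1 odd_gt0 // odd_symdiff cards1.
  by rewrite (negbTE (feasible_even hX)).
exists X; rewrite // Xr; apply: contraTN vX => vX.
by apply/set0Pn; exists v; rewrite !inE eqxx.
Qed.

Lemma max_avoiding_nonedge u v : u != v -> C u v = 0%R ->
  exists2 X, X \in D & [&& #|X| == r, u \notin X & v \notin X].
Proof.
move=> uv cuv.
have [X hX /andP [Xr uvX]] : exists2 X, X \in D & (#|X| == r) && ([set u; v] :&: X == set0).
  apply: max_disjoint => X hX; rewrite cards2 uv.
  have ev : ~~ odd #|symdiff [set u; v] X|.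
    by rewrite odd_symdiff cards2 uv (negbTE (feasible_even hX)).
  have ne0 : symdiff [set u; v] X != set0.
    rewrite symdiff_eq0; apply: contraTneq hX => <-.
    by rewrite pair_feasible // cuv eq_sym oner_eq0.
  by apply: (even_ltn_add2 (a := 0)); rewrite // card_gt0.
exists X; rewrite // Xr /=; apply/andP; split; apply: contraTN uvX => wX.
  by apply/set0Pn; exists u; rewrite !inE eqxx.
by apply/set0Pn; exists v; rewrite !inE eqxx orbT.
Qed.

(* Twisting by an edge {u, v} (a feasible set) shows that every maximum
   feasible set meets every edge. *)
Lemma max_covers_edge u v X : C u v = 1%R -> X \in D -> #|X| = r ->
  (u \in X) || (v \in X).
Proof.
move=> cuv hX Xr; apply: contraT; rewrite negb_or => /andP [uX vX].
have uv : u != v.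
  by apply/eqP => e; move: cuv; rewrite e C_diag => /eqP; rewrite eq_sym oner_eq0.
have uvD : [set u; v] \in D by rewrite pair_feasible // cuv.
have := width_lb [set u; v] hX uvD; rewrite const_width symdiffXX cards0 subn0.
have := card_symdiff [set u; v] X; rewrite cards2 uv Xr.
have -> : [set u; v] :&: X = set0.
  by apply/setP=> x; rewrite !inE; case: eqP => [->|_]; [|case: eqP => [->|_]];
    rewrite ?(negbTE uX) ?(negbTE vX) ?andbF.
rewrite cards0; lia.
Qed.

(* Under constant width a maximum feasible set avoiding v contains all
   neighbours of v; in a complete graph it is E - v, which is even. *)
Lemma complete_odd_card (v : T) : (forall x y, x != y -> C x y = 1%R) -> odd #|T|.
Proof.
move=> complete; have [X hX /andP [/eqP Xr vX]] := max_avoiding_vertex v.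
have defX : X = [set~ v].
  apply/setP=> y; rewrite !inE; have [-> | yv] := eqVneq y v; first exact: negbTE.
  by have := max_covers_edge (complete y v yv) hX Xr; rewrite (negbTE vX) orbF.
move: (feasible_even hX); rewrite defX cardsC1.
have : 0 < #|T| by apply/card_gt0P; exists v.
by case: #|T| => //= n _; rewrite negbK.
Qed.

Section NoInducedPath.
Variables (u v w : T).
Hypotheses (uv : u != v) (cuw : C u w = 1%R) (cvw : C v w = 1%R).

Definition path_basis Y := [&& Y \in D, #|Y| == r, w \notin Y, u \in Y & v \in Y].

Lemma path_basis_exists : exists Y, path_basis Y.
Proof.
have [Y hY /andP [/eqP Yr wY]] := max_avoiding_vertex w.
have cover x : C x w = 1%R -> x \in Y.
  by move=> cxw; have := max_covers_edge cxw hY Yr; rewrite (negbTE wY) orbF.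
by exists Y; rewrite /path_basis hY Yr eqxx wY !cover.
Qed.

Variable X : {set T}.
Hypotheses (hX : X \in D) (Xr : #|X| = r) (uX : u \notin X) (vX : v \notin X).

(* Exchanging an element of X - Y (other than w) into Y produces a path
   basis closer to X: the element leaving Y can be neither u nor v, for
   otherwise the edge uw or vw would be uncovered. *)
Lemma path_basis_step Y : path_basis Y ->
  exists2 Y', path_basis Y' & #|Y' :\: X| < #|Y :\: X|.
Proof.
case/and5P=> hY /eqP Yr wY uY vY.
have uvYX : 2 <= #|Y :\: X|.
  have <- : #|[set u; v]| = 2 by rewrite cards2 uv.
  apply/subset_leq_card/subsetP => t.
  by rewrite !inE => /orP [] /eqP ->; rewrite ?uY ?uX ?vY ?vX.
have XYw : 0 < #|(X :\: Y) :\ w|.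
  have := cardsD1 w (X :\: Y); have : #|X :\: Y| = #|Y :\: X|.
    by rewrite !cardsD Xr Yr setIC.
  by move=> e1 e2; have := leq_b1 (w \in X :\: Y); lia.
have [x /setD1P [xw xXY]] := card_gt0P XYw.
have Ymax Z : Z \in D -> #|Z| <= #|Y| by rewrite Yr; apply: leq_rank.
have [z /setDP [zY zX] hY'] := max_exchange D_dm hX hY Ymax xXY.
have [xX xY] := setDP xXY.
set Y' := x |: (Y :\ z) in hY' *.
have Y'r : #|Y'| = r.
  rewrite cardsU1 in_setD1 (negbTE xY) andbF /=.
  by have := cardsD1 z Y; rewrite zY Yr => ->.
have wY' : w \notin Y' by rewrite !inE eq_sym (negbTE xw) (negbTE wY) andbF.
have keep t : C t w = 1%R -> t \in Y'.
  by move=> ctw; have := max_covers_edge ctw hY' Y'r; rewrite (negbTE wY') orbF.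
exists Y'; first by rewrite /path_basis hY' Y'r eqxx wY' !keep.
have -> : Y' :\: X = (Y :\: X) :\ z.
  apply/setP => t; rewrite !inE; have [-> | tx] := eqVneq t x; first by rewrite xX andbF.
  by rewrite /=; case: (t == z); rewrite ?andbF.
by rewrite (cardsD1 z (Y :\: X)) inE zY zX /=.
Qed.

End NoInducedPath.

(* Constant width excludes induced paths u - w - v: a path basis minimizing
   the distance to a maximum feasible set avoiding u and v would admit a
   further step. *)
Lemma no_induced_P3 u v w :
  u != v -> C u w = 1%R -> C v w = 1%R -> C u v = 0%R -> False.
Proof.
move=> uv cuw cvw cuv.
have [X hX /and3P [/eqP Xr uX vX]] := max_avoiding_nonedge uv cuv.
have [Y0 hY0] := path_basis_exists cuw cvw.
case: (arg_minnP (fun Y => #|Y :\: X|) hY0) => Y hY Ymin.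
have [Y' hY' lt] := path_basis_step uv cuw cvw hX Xr uX vX hY.
by have := Ymin _ hY'; rewrite leqNgt lt.
Qed.

Lemma constant_width_complete : is_connected D ->
  forall x y, x != y -> C x y = 1%R.
Proof.
move=> conn x y xy; have [cxy | //] := F2_cases (C x y).
by case: conn; apply: nonedge_disconnected no_induced_P3 x y xy cxy.
Qed.

End ConstantWidth.

End EvenBinary.

Local Open Scope ring_scope.
Unset Implicit Arguments.

Theorem mainTheorem9 (E : finType) (F : {set {set E}})
  (C : E -> E -> 'F_2)
  (hdm : is_delta_matroid F) (hconn : is_connected F) (heven : is_even F)
  (hnorm : is_normal F) (hbin : is_binary F) (hE : (0 < #|E|)%N)
  (hCsym : symmetric_mat C) (hDC : F = DC C) :
  (exists (m : int) (k : nat), twist_poly F = m%:P * 'X^k) <->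
  complete_odd_order C.
Proof.
subst F; rewrite twist_poly_monomialP; split => [[k const_k] | [adj E_odd]].
  have const_width A : width (twist (DC C) A) = rank (DC C).
    by rewrite const_k -(width_normal hnorm) const_k.
  have complete := constant_width_complete hCsym hdm hnorm heven const_width hconn.
  have [v _] := card_gt0P hE.
  split; first by move=> u w uw; rewrite /adj_of uw complete ?eqxx.
  exact: complete_odd_card hCsym hnorm heven const_width v complete.
exists #|E|.-1; apply: even_sets_width E_odd; apply: complete_feasible hnorm heven _.
by move=> x y xy; have /andP [_ /eqP] := adj x y xy.
Qed.
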